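(* Let $\epsilon>0$, $\beta\ge 0$, let $M\ge 4$ be an even integer and $N\ge 3$ an integer, and let $\mathcal A$ be the upwind Shishkin-mesh matrix described in the context. Let $x=\mathcal A^{-1}b$ and consider the multiplicative Schwarz method $x^{(k+1)}=T_{ij}x^{(k)}+v$, $k=0,1,2,\dots$, with $(i,j)\in\{(1,2),(2,1)\}$, $v=(I-T_{ij})x$, arbitrary $x^{(0)}$, and errors $e^{(k)}=x-x^{(k)}$ (with $e^{(0)}\ne 0$). Then \[ \frac{\|e^{(k+1)}\|_\infty}{\|e^{(0)}\|_\infty}\le \rho^{k}\,\|T_{ij}\|_\infty,\qquad k=0,1,2,\dots, \] where \[ \rho=\frac{\epsilon}{\epsilon+H_y},\qquad \|T_{12}\|_\infty\le\rho,\qquad \|T_{21}\|_\infty\le 1. \]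
   Context: Setting: let $\tau_y=\min\{1/2,\,2\epsilon\ln M\}$, $H_x=1/N$, $H_y=2(1-\tau_y)/M$, $h_y=2\tau_y/M$, and $m=M/2-1$. Define the scalars $d_H=-\frac{\epsilon}{H_y^2}-\frac1{H_y}$, $d=-\frac{2\epsilon}{H_y(H_y+h_y)}-\frac1{H_y}$, $d_h=-\frac{\epsilon}{h_y^2}-\frac1{h_y}$, $e_H=-\frac{\epsilon}{H_y^2}$, $e=-\frac{2\epsilon}{h_y(H_y+h_y)}$, $e_h=-\frac{\epsilon}{h_y^2}$, and $a_H=\frac{2\epsilon}{H_x^2}+\frac{2\epsilon}{H_y^2}+\frac1{H_y}+\beta$, $a=\frac{2\epsilon}{H_x^2}+\frac{2\epsilon}{H_yh_y}+\frac1{H_y}+\beta$, $a_h=\frac{2\epsilon}{H_x^2}+\frac{2\epsilon}{h_y^2}+\frac1{h_y}+\beta$. With $I$ the identity of size $N-1$, let $C_H=d_HI$, $C=dI$, $C_h=d_hI$, $B_H=e_HI$, $B=eI$, $B_h=e_hI$, and let $A_H,A,A_h$ be the $(N-1)\times(N-1)$ tridiagonal Toeplitz matrices with off-diagonal entries $-\epsilon/H_x^2$ and diagonal entries $a_H,a,a_h$. Let $\hat A_H$ (resp. $\hat A_h$) be the $m\times m$ block tridiagonal matrix with diagonal blocks $A_H$ (resp. $A_h$), subdiagonal blocks $C_H$ (resp. $C_h$) and superdiagonal blocks $B_H$ (resp. $B_h$), and $\mathcal A=\begin{bmatrix}\hat A_H & e_m\otimes B_H & 0\\ e_m^{T}\otimes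 C & A & e_1^{T}\otimes B\\ 0 & e_1\otimes C_h & \hat A_h\end{bmatrix}$, with $e_1,e_m$ the first and last canonical basis vectors of $\mathbb R^m$ and $\otimes$ the Kronecker product. (This is the upwind finite difference discretization of $-\epsilon\Delta u+u_y+\beta u=f$ on $(0,1)^2$ with Dirichlet boundary conditions on the Shishkin mesh with nodes $(iH_x,y_j)$, $y_j=jH_y$ for $j\le M/2$ and $y_j=1-(M-j)h_y$ for $j>M/2$, in lexicographic line ordering.) Let $n=N-1$, $A_1=\begin{bmatrix}\hat A_H & e_m\otimes B_H\\ e_m^{T}\otimes C & A\end{bmatrix}$, $A_2=\begin{bmatrix} A & e_1^{T}\otimes B\\ e_1\otimes C_h & \hat A_h\end{bmatrix}$, $R_1=[I_{n(m+1)}\;\,0]$, $R_2=[0\;\,I_{n(m+1)}]$, $P_i=R_i^{T}A_i^{-1}R_i\mathcal A$, $Q_i=I-P_i$, and the multiplicative Schwarz iteration matrices $T_{12}=Q_2Q_1$, $T_{21}=Q_1Q_2$. *)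

From HB Require Import structures.
From mathcomp Require Import all_boot all_order all_algebra.
From mathcomp Require Import reals exp.
Set Implicit Arguments. Unset Strict Implicit. Unset Printing Implicit Defensive.
Import Order.TTheory GRing.Theory Num.Theory.
Local Open Scope ring_scope.

Section Shishkin.
Variables (R : realType) (eps beta : R) (M N : nat).

Definition tau_y : R := Num.min (1 / 2) (2 * eps * ln (M%:R)).
Definition Hx : R := 1 / N%:R.
Definition Hy : R := 2 * (1 - tau_y) / M%:R.
Definition hy : R := 2 * tau_y / M%:R.
Definition mm : nat := (M %/ 2 - 1)%N.
Definition nn : nat := (N - 1)%N.

Definition d_H : R := - eps / Hy ^+ 2 - 1 / Hy.
Definition d_0 : R := - (2 * eps) / (Hy * (Hy + hy)) - 1 / Hy.
Definition d_h : R := - eps / hy ^+ 2 - 1 / hy.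
Definition e_H : R := - eps / Hy ^+ 2.
Definition e_0 : R := - (2 * eps) / (hy * (Hy + hy)).
Definition e_h : R := - eps / hy ^+ 2.
Definition a_H : R := 2 * eps / Hx ^+ 2 + 2 * eps / Hy ^+ 2 + 1 / Hy + beta.
Definition a_0 : R := 2 * eps / Hx ^+ 2 + 2 * eps / (Hy * hy) + 1 / Hy + beta.
Definition a_h : R := 2 * eps / Hx ^+ 2 + 2 * eps / hy ^+ 2 + 1 / hy + beta.

(* coefficients of block row r (r = 0 .. 2m): rows r < m are coarse lines
   (A_H, C_H, B_H), row m is the transition line (A, C, B), rows r > m are
   fine lines (A_h, C_h, B_h). *)
Definition blk_diag (r : nat) : R :=
  if (r < mm)%N then a_H else if r == mm then a_0 else a_h.
Definition blk_sub (r : nat) : R :=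
  if (r < mm)%N then d_H else if r == mm then d_0 else d_h.
Definition blk_sup (r : nat) : R :=
  if (r < mm)%N then e_H else if r == mm then e_0 else e_h.

Definition dimA : nat := (nn * (2 * mm + 1))%N.
Definition dimS : nat := (nn * (mm + 1))%N.

(* entry (p, q) of the block tridiagonal matrix; global index p corresponds to
   block (line) p %/ n and position p %% n inside the line *)
Definition Aentry (p q : nat) : R :=
  let r := (p %/ nn)%N in let i := (p %% nn)%N in
  let s := (q %/ nn)%N in let j := (q %% nn)%N in
  if r == s then
    (if i == j then blk_diag r
     else if (i.+1 == j) || (j.+1 == i) then - eps / Hx ^+ 2 else 0)
  else if (s.+1 == r) && (i == j) then blk_sub r
  else if (r.+1 == s) && (i == j) then blk_sup r
  else 0.

Definition Amat : 'M[R]_dimA := \matrix_(p < dimA, q < dimA) Aentry p q.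

Definition A1mat : 'M[R]_dimS := \matrix_(p < dimS, q < dimS) Aentry p q.
Definition A2mat : 'M[R]_dimS :=
  \matrix_(p < dimS, q < dimS) Aentry (p + nn * mm)%N (q + nn * mm)%N.

Definition R1mat : 'M[R]_(dimS, dimA) :=
  \matrix_(p < dimS, q < dimA) ((p : nat) == q)%:R.
Definition R2mat : 'M[R]_(dimS, dimA) :=
  \matrix_(p < dimS, q < dimA) ((p + nn * mm)%N == q)%:R.

Definition P1mat : 'M[R]_dimA := R1mat^T *m invmx A1mat *m R1mat *m Amat.
Definition P2mat : 'M[R]_dimA := R2mat^T *m invmx A2mat *m R2mat *m Amat.
Definition Q1mat : 'M[R]_dimA := 1%:M - P1mat.
Definition Q2mat : 'M[R]_dimA := 1%:M - P2mat.
Definition T12 : 'M[R]_dimA := Q2mat *m Q1mat.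
Definition T21 : 'M[R]_dimA := Q1mat *m Q2mat.

Definition rho : R := eps / (eps + Hy).

End Shishkin.

Definition vnorm_inf (R : realType) (p : nat) (v : 'cV[R]_p) : R :=
  \big[Num.max/0]_(i < p) `|v i 0|.
Definition mnorm_inf (R : realType) (p q : nat) (A : 'M[R]_(p, q)) : R :=
  \big[Num.max/0]_(i < p) \sum_(j < q) `|A i j|.

Fixpoint iterate (R : realType) (p : nat) (T : 'M[R]_p) (v x0 : 'cV[R]_p)
  (k : nat) : 'cV[R]_p :=
  if k is k'.+1 then T *m iterate T v x0 k' + v else x0.

From Pilot Require Import Defs.
From HB Require Import structures.
From mathcomp Require Import all_boot all_order all_algebra.
From mathcomp Require Import reals exp.
From mathcomp Require Import ring lra zify.

Set Implicit Arguments.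
Unset Strict Implicit.
Unset Printing Implicit Defensive.

Import Order.TTheory GRing.Theory Num.Theory.
Local Open Scope ring_scope.

(* The matrix [A] is a Z-matrix whose rows are weakly chained diagonally
   dominant, so it obeys a discrete minimum principle: a vector that is
   [A]-harmonic on a set of rows is bounded there by any barrier that is
   [A]-superharmonic on those rows and dominates it on the others.  The factor
   [Q_i = I - P_i] keeps the unknowns outside subdomain [i] and makes them
   [A]-harmonic inside it.  On the coarse subdomain the barrier [rho^(m - line)]
   is superharmonic because [rho] is the second root of the characteristic
   equation of the coarse three-point stencil, so [Q_1] damps the values on the
   first [m] lines by [rho] relative to its data on the fine lines; the constant
   barrier shows that [Q_2] does not increase the maximum of its data on the
   coarse lines.  Composing the two bounds gives [||T_12 v|| <= rho ||v||].  For
   [T_21], the maximum of [v] on the coarse lines, which is all [T_21 v] depends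
   on, contracts by [rho] and controls [||T_21 v||]. *)

Section SupNorms.
Variables (R : realType) (n : nat).
Implicit Types (P : pred 'I_n) (v : 'cV[R]_n).

Definition supnorm_on P v : R := \big[Num.max/0]_(q < n | P q) `|v q 0|.

Lemma supnorm_on_ge0 P v : 0 <= supnorm_on P v.
Proof. by elim/big_ind: (supnorm_on P v) => // x y hx hy; rewrite le_max hx. Qed.

Lemma ler_supnorm_on P v q : P q -> `|v q 0| <= supnorm_on P v.
Proof. exact: (le_bigmax_cond _ (fun q => `|v q 0|)). Qed.

Lemma supnorm_on_le P v c :
  0 <= c -> (forall q, P q -> `|v q 0| <= c) -> supnorm_on P v <= c.
Proof. exact: bigmax_le. Qed.

Lemma vnorm_inf_ge0 v : 0 <= vnorm_inf v.
Proof. exact: supnorm_on_ge0. Qed.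

Lemma ler_vnorm_inf v q : `|v q 0| <= vnorm_inf v.
Proof. exact: ler_supnorm_on. Qed.

Lemma vnorm_inf_le v c : 0 <= c -> (forall q, `|v q 0| <= c) -> vnorm_inf v <= c.
Proof. by move=> c_ge0 le_vc; apply: supnorm_on_le. Qed.

Lemma supnorm_on_le_vnorm P v : supnorm_on P v <= vnorm_inf v.
Proof. by apply: supnorm_on_le (vnorm_inf_ge0 v) _ => q _; apply: ler_vnorm_inf. Qed.

Lemma vnorm_inf_gt0 v : v != 0 -> 0 < vnorm_inf v.
Proof.
move=> v_neq0; have [q vq_neq0] : exists q, v q 0 != 0.
  apply/existsP; apply: contraNT v_neq0; rewrite negb_exists => /forallP v0.
  by apply/eqP/matrixP => q j; rewrite ord1 mxE; apply/eqP/negbNE/v0.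
by rewrite (lt_le_trans _ (ler_vnorm_inf v q)) ?normr_gt0.
Qed.

End SupNorms.

Section OperatorNorm.
Variables (R : realType) (p q : nat).
Implicit Type T : 'M[R]_(p, q).

Lemma mnorm_inf_ge0 T : 0 <= mnorm_inf T.
Proof.
elim/big_ind: (mnorm_inf T) => [||i _]; first by [].
  by move=> x y hx hy; rewrite le_max hx.
by apply: sumr_ge0 => j _.
Qed.

Lemma vnorm_inf_mulmx T v : vnorm_inf (T *m v) <= mnorm_inf T * vnorm_inf v.
Proof.
apply: vnorm_inf_le; first by rewrite mulr_ge0 ?mnorm_inf_ge0 ?vnorm_inf_ge0.
move=> i; rewrite mxE; apply: le_trans (ler_norm_sum _ _ _) _.
apply: (@le_trans _ _ ((\sum_j `|T i j|) * vnorm_inf v)).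
  rewrite mulr_suml; apply: ler_sum => j _; rewrite normrM.
  by rewrite ler_wpM2l ?ler_vnorm_inf.
rewrite ler_wpM2r ?vnorm_inf_ge0 //.
exact: (le_bigmax _ (fun i => \sum_j `|T i j|)).
Qed.

(* Testing on the sign vector of row [i] shows that the operator norm is attained. *)
Lemma mnorm_inf_le T c :
  0 <= c -> (forall v, vnorm_inf (T *m v) <= c * vnorm_inf v) -> mnorm_inf T <= c.
Proof.
move=> c_ge0 leTc; apply: bigmax_le => // i _.
pose s : 'cV[R]_q := \col_j Num.sg (T i j).
have s_le1 : vnorm_inf s <= 1.
  by apply: vnorm_inf_le => // j; rewrite mxE normr_sg; case: (_ != 0).
have -> : \sum_j `|T i j| = (T *m s) i 0.
  by rewrite mxE; apply: eq_bigr => j _; rewrite mxE normrEsg mulrC.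
apply: le_trans (ler_norm _) _; apply: le_trans (ler_vnorm_inf _ i) _.
by apply: le_trans (leTc s) _; rewrite -[leRHS]mulr1 ler_wpM2l.
Qed.

End OperatorNorm.

Section StationaryIteration.
Variables (R : realType) (p : nat) (T : 'M[R]_p).

Lemma iterate_error_ratio_le (K : 'cV[R]_p -> R) (r : R) :
  0 <= r -> (forall v, K (T *m v) <= r * K v) ->
  (forall v, vnorm_inf (T *m v) <= mnorm_inf T * K v) ->
  (forall v, K v <= vnorm_inf v) ->
  forall x x0 : 'cV[R]_p,
    let v := (1%:M - T) *m x in
    let e := fun k => x - iterate T v x0 k in
    e 0%N != 0 ->
    forall k, vnorm_inf (e k.+1) / vnorm_inf (e 0%N) <= r ^+ k * mnorm_inf T.
Proof.
move=> r_ge0 K_contr T_K K_le x x0 v e e0_neq0 k.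
have eS j : e j.+1 = T *m e j.
  by rewrite /e /= /v mulmxBl mul1mx mulmxBr; apply/matrixP => i l; rewrite !mxE; ring.
have K_e j : K (e j) <= r ^+ j * K (e 0%N).
  elim: j => [|j IHj]; first by rewrite expr0 mul1r.
  rewrite eS exprSr -mulrA; apply: le_trans (K_contr _) _.
  by rewrite mulrCA ler_wpM2l.
rewrite ler_pdivrMr ?vnorm_inf_gt0 // eS; apply: le_trans (T_K _) _.
rewrite [r ^+ k * _]mulrC -mulrA ler_wpM2l ?mnorm_inf_ge0 //.
by apply: le_trans (K_e k) _; rewrite ler_wpM2l ?exprn_ge0.
Qed.

End StationaryIteration.

Section MatrixEntries.
Variables (R : realType) (m n : nat).
Implicit Types X Y : 'M[R]_(m, n).

Lemma entryD X Y i j : (X + Y) i j = X i j + Y i j. Proof. by rewrite mxE. Qed.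
Lemma entryB X Y i j : (X - Y) i j = X i j - Y i j. Proof. by rewrite !mxE. Qed.
Lemma entryN X i j : (- X) i j = - X i j. Proof. by rewrite mxE. Qed.

End MatrixEntries.

Section IndicatorSums.
Variables (R : realType) (k : nat).

Lemma sum_if_inj_eq (g : nat -> nat) (j : nat) (c : R) : injective g ->
  \sum_(q < k) (if g q == j then c else 0) = if [exists q : 'I_k, g q == j] then c else 0.
Proof.
move=> g_inj; case: existsP => [[q0 /eqP gq0]|no_q].
  rewrite (bigD1 q0) //= gq0 eqxx big1 ?addr0 // => q qq0; case: eqP => // gq.
  by case/eqP: qq0; apply/val_inj/g_inj; rewrite gq gq0.
by rewrite big1 // => q _; case: eqP => // gq; case: no_q; exists q; apply/eqP.
Qed.

Lemma sum_if_inj_eq_ge (g : nat -> nat) (j : nat) (c : R) : injective g -> c <= 0 ->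
  c <= \sum_(q < k) (if g q == j then c else 0).
Proof. by move=> g_inj c_le0; rewrite sum_if_inj_eq //; case: ifP. Qed.

End IndicatorSums.

Section MinimumPrinciple.
Variables (R : realType) (n : nat).

Definition Z_matrix (A : 'M[R]_n) := forall p q, p != q -> A p q <= 0.

(* Following negative entries to earlier rows always ends at a row with a
   positive sum. *)
Definition lower_chained_dominant (A : 'M[R]_n) :=
  forall p, 0 < \sum_q A p q \/
    0 <= \sum_q A p q /\ exists2 q : 'I_n, (q < p)%N & A p q < 0.

Variable A : 'M[R]_n.
Hypotheses (A_Z : Z_matrix A) (A_chained : lower_chained_dominant A).

Lemma min_principle (D : pred 'I_n) (u : 'cV[R]_n) :
  (forall p, D p -> 0 <= (A *m u) p 0) -> (forall p, ~~ D p -> 0 <= u p 0) ->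
  forall p, 0 <= u p 0.
Proof.
move=> Au_ge0 u_ge0 p; rewrite leNgt; apply/negP => up_lt0.
have [p0 _ min_u] := @arg_minP _ _ _ p predT (fun i => u i 0) isT.
set m0 := u p0 0 in min_u.
have m0_lt0 : m0 < 0 by apply: le_lt_trans (min_u p isT) up_lt0.
have Au_split q : (A *m u) q 0 = m0 * \sum_j A q j + \sum_j A q j * (u j 0 - m0).
  by rewrite mxE mulr_sumr -big_split; apply: eq_bigr => j _ /=; ring.
suff: forall k (q : 'I_n), val q = k -> u q 0 != m0 by move/(_ _ p0 erefl); rewrite eqxx.
elim/ltn_ind => k IHk q qk; apply/eqP => uq.
have Dq : D q by apply: contraTT m0_lt0 => /u_ge0; rewrite -uq -leNgt.
have dev_le0 j : A q j * (u j 0 - m0) <= 0.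
  have [->|] := eqVneq j q; first by rewrite uq subrr mulr0.
  by rewrite eq_sym => /A_Z Aqj; rewrite mulr_le0_ge0 // subr_ge0 min_u.
have sum_dev_le0 : \sum_j A q j * (u j 0 - m0) <= 0 by apply: sumr_le0.
have := Au_ge0 q Dq; rewrite Au_split.
case: (A_chained q) => [rs_gt0 | [rs_ge0 [j jq Aqj_lt0]]].
  have : m0 * \sum_j A q j < 0 by rewrite pmulr_llt0.
  lra.
have uj_gt : m0 < u j 0.
  by rewrite lt_neqAle min_u // andbT eq_sym; apply: (IHk _ _ j erefl); rewrite -qk.
have dev_j_lt0 : A q j * (u j 0 - m0) < 0 by rewrite pmulr_llt0 // subr_gt0.
have : \sum_j A q j * (u j 0 - m0) < 0.
  rewrite (bigD1 j) //=.
  have : \sum_(i | i != j) A q i * (u i 0 - m0) <= 0 by apply: sumr_le0.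
  lra.
have : m0 * \sum_j A q j <= 0 by rewrite nmulr_rle0.
lra.
Qed.

Lemma harmonic_eq0 (D : pred 'I_n) (u : 'cV[R]_n) :
  (forall p, D p -> (A *m u) p 0 = 0) -> (forall p, ~~ D p -> u p 0 = 0) -> u = 0.
Proof.
move=> Au0 u0.
have Nu_ge0 : forall p, 0 <= (- u) p 0.
  apply: (min_principle (D := D)) => q Dq; first by rewrite mulmxN entryN Au0 ?oppr0.
  by rewrite entryN u0 ?oppr0.
apply/matrixP => p j; rewrite ord1 [RHS]mxE; apply/le_anti/andP; split.
  by have := Nu_ge0 p; rewrite entryN oppr_ge0.
by apply: (min_principle (D := D)) => q Dq; rewrite ?Au0 ?u0.
Qed.

Lemma harmonic_le_barrier (D : pred 'I_n) (u phi : 'cV[R]_n) :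
  (forall p, D p -> (A *m u) p 0 = 0) -> (forall p, D p -> 0 <= (A *m phi) p 0) ->
  (forall p, ~~ D p -> `|u p 0| <= phi p 0) -> forall p, `|u p 0| <= phi p 0.
Proof.
move=> Au0 Aphi_ge0 u_le_phi p.
have phiBu : 0 <= (phi - u) p 0.
  apply: (min_principle (D := D)) => q Dq.
    by rewrite mulmxBr entryB Au0 // subr0 Aphi_ge0.
  by rewrite entryB subr_ge0; move: (u_le_phi q Dq); rewrite ler_norml => /andP[].
have phiDu : 0 <= (phi + u) p 0.
  apply: (min_principle (D := D)) => q Dq.
    by rewrite mulmxDr entryD Au0 // addr0 Aphi_ge0.
  by rewrite entryD; move: (u_le_phi q Dq); rewrite ler_norml => /andP[]; lra.
by move: phiBu phiDu; rewrite entryB entryD ler_norml => ? ?; apply/andP; split; lra.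
Qed.

End MinimumPrinciple.

Section SchwarzWindow.
Variables (R : realType) (s n o : nat) (A : 'M[R]_n).
Hypothesis window_le : (s + o <= n)%N.

Definition restr_mx : 'M[R]_(s, n) := \matrix_(p < s, q < n) ((p + o)%N == q)%:R.
Definition local_mx : 'M[R]_s := restr_mx *m A *m restr_mx^T.
Definition schwarz_Q : 'M[R]_n :=
  1%:M - restr_mx^T *m invmx local_mx *m restr_mx *m A.
Definition in_window (q : 'I_n) := (o <= q < o + s)%N.

Fact window_ord_proof (p : 'I_s) : (p + o < n)%N.
Proof. by have := ltn_ord p; lia. Qed.

Definition window_ord (p : 'I_s) : 'I_n := Ordinal (window_ord_proof p).

Lemma restr_mulmxE k (B : 'M[R]_(n, k)) p j : (restr_mx *m B) p j = B (window_ord p) j.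
Proof.
rewrite mxE (bigD1 (window_ord p)) //= mxE eqxx mul1r big1 ?addr0 // => q qp.
by rewrite mxE -[(p + o)%N]/(val (window_ord p)) (inj_eq val_inj) eq_sym (negbTE qp) mul0r.
Qed.

Lemma restrT_mulmx_out k (B : 'M[R]_(s, k)) q j : ~~ in_window q -> (restr_mx^T *m B) q j = 0.
Proof.
move=> q_out; rewrite mxE big1 // => p _; rewrite !mxE.
case: eqP => [pq|]; last by rewrite mul0r.
by move: q_out; rewrite /in_window -pq; have := ltn_ord p; lia.
Qed.

Lemma mulmx_restrTE k (B : 'M[R]_(k, n)) i p : (B *m restr_mx^T) i p = B i (window_ord p).
Proof. by rewrite -[B]trmxK -trmx_mul mxE restr_mulmxE trmxK mxE. Qed.

Lemma restr_mul_restrT : restr_mx *m restr_mx^T = 1%:M.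
Proof.
by apply/matrixP => p p'; rewrite mulmx_restrTE !mxE eqn_add2r (inj_eq val_inj).
Qed.

Lemma restr_mul_eq0 (w : 'cV[R]_n) q : restr_mx *m w = 0 -> in_window q -> w q 0 = 0.
Proof.
move=> rw0 /andP[oq qos]; have qo_lt : (q - o < s)%N by lia.
have -> : q = window_ord (Ordinal qo_lt) by apply: val_inj => /=; lia.
by rewrite -restr_mulmxE rw0 mxE.
Qed.

Lemma local_mxE (F : nat -> nat -> R) :
  A = \matrix_(p, q) F p q -> local_mx = \matrix_(p, q) F (p + o)%N (q + o)%N.
Proof. by move=> AE; apply/matrixP => p q; rewrite mulmx_restrTE restr_mulmxE AE !mxE. Qed.

Lemma schwarz_QE (e : 'cV[R]_n) :
  schwarz_Q *m e = e - restr_mx^T *m (invmx local_mx *m (restr_mx *m (A *m e))).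
Proof. by rewrite mulmxBl mul1mx !mulmxA. Qed.

Lemma schwarz_Q_out (e : 'cV[R]_n) q : ~~ in_window q -> (schwarz_Q *m e) q 0 = e q 0.
Proof. by move=> q_out; rewrite schwarz_QE entryB restrT_mulmx_out // subr0. Qed.

Lemma schwarz_Q_harmonic (e : 'cV[R]_n) q :
  local_mx \in unitmx -> in_window q -> (A *m (schwarz_Q *m e)) q 0 = 0.
Proof.
move=> unit_loc; apply: restr_mul_eq0.
by rewrite schwarz_QE !mulmxBr !mulmxA -/local_mx mulmxV // mul1mx subrr.
Qed.

Lemma local_mx_unit :
  (forall u : 'cV[R]_n, (forall q, in_window q -> (A *m u) q 0 = 0) ->
     (forall q, ~~ in_window q -> u q 0 = 0) -> u = 0) ->
  local_mx \in unitmx.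
Proof.
move=> uniq; rewrite unitmxE unitfE -det_tr; apply/negP => /det0P[v v_neq0 vL0].
have w0 : restr_mx^T *m v^T = 0.
  apply: uniq => [q q_in|q q_out]; last exact: restrT_mulmx_out.
  apply: restr_mul_eq0 q_in.
  by rewrite !mulmxA -/local_mx -[local_mx]trmxK -trmx_mul vL0 trmx0.
move/negP: v_neq0; apply; apply/eqP.
by rewrite -[v]trmxK -[v^T]mul1mx -restr_mul_restrT -mulmxA w0 mulmx0 trmx0.
Qed.

End SchwarzWindow.

Section ShishkinMatrix.
Variables (R : realType) (eps beta : R) (M N : nat).
Hypotheses (eps_gt0 : 0 < eps) (beta_ge0 : 0 <= beta).
Hypotheses (M_ge4 : (4 <= M)%N) (N_ge3 : (3 <= N)%N).

Local Notation n := (nn N).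
Local Notation m := (mm M).
Local Notation line q := (q %/ nn N)%N.
Local Notation dA := (dimA M N).
Local Notation dS := (dimS M N).
Local Notation A := (Amat eps beta M N).
Local Notation Aentry := (Aentry eps beta M N).
Local Notation H := (Hy eps M).
Local Notation h := (hy eps M).
Local Notation cX := (eps / Hx R N ^+ 2).
Local Notation rho := (rho eps M).
Local Notation diag := (blk_diag eps beta M N).
Local Notation sub := (blk_sub eps M).
Local Notation sup := (blk_sup eps M).
Local Notation Q1 := (Q1mat eps beta M N).
Local Notation Q2 := (Q2mat eps beta M N).
Local Notation K1 := (supnorm_on (fun q : 'I_dA => (dS <= q)%N)).
Local Notation K2 := (supnorm_on (fun q : 'I_dA => (q < n * m)%N)).

Lemma nn_gt1 : (1 < n)%N. Proof. by rewrite /nn; lia. Qed.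
Lemma mm_gt0 : (0 < m)%N. Proof. by rewrite /mm; lia. Qed.

Lemma Hy_gt0 : 0 < H.
Proof.
have tau_le : tau_y eps M <= 1 / 2 by rewrite /tau_y ge_min lexx.
by rewrite /Hy divr_gt0 ?ltr0n //; [lra | lia].
Qed.

Lemma hy_gt0 : 0 < h.
Proof.
have tau_gt0 : 0 < tau_y eps M.
  rewrite /tau_y lt_min; apply/andP; split; first lra.
  by rewrite !mulr_gt0 // ln_gt0 // ltr1n; lia.
by rewrite /hy divr_gt0 ?ltr0n //; [lra | lia].
Qed.

Lemma Hx_gt0 : 0 < Hx R N.
Proof. by rewrite /Hx divr_gt0 // ltr0n; lia. Qed.

Lemma cX_ge0 : 0 <= cX.
Proof. by rewrite divr_ge0 ?sqr_ge0 ?ltW. Qed.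

Lemma rho_ge0 : 0 <= rho.
Proof. by rewrite /Defs.rho divr_ge0 ?ltW ?addr_gt0 ?Hy_gt0. Qed.

Lemma rho_le1 : rho <= 1.
Proof. by rewrite /Defs.rho ler_pdivrMr ?addr_gt0 ?Hy_gt0 // mul1r lerDl ltW ?Hy_gt0. Qed.

Lemma blk_sub_lt0 r : sub r < 0.
Proof.
have H_gt0 := Hy_gt0; have h_gt0 := hy_gt0.
have neg_inv (x y z : R) : 0 < x -> 0 < y -> 0 < z -> - x / y - 1 / z < 0.
  move=> x_gt0 y_gt0 z_gt0; have : 0 < x / y by apply: divr_gt0.
  have : 0 < 1 / z by apply: divr_gt0.
  rewrite mulNr; lra.
rewrite /blk_sub; case: ifP => _; [|case: ifP => _].
- by apply: neg_inv => //; apply: exprn_gt0.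
- by apply: neg_inv => //; apply: mulr_gt0 => //; apply: addr_gt0.
- by apply: neg_inv => //; apply: exprn_gt0.
Qed.

Lemma blk_sup_le0 r : sup r <= 0.
Proof.
have eps_ge0 := ltW eps_gt0; have H_gt0 := Hy_gt0; have h_gt0 := hy_gt0.
rewrite /blk_sup /e_H /e_0 /e_h; case: ifP => _; [|case: ifP => _]; rewrite mulNr oppr_le0.
- exact: divr_ge0 eps_ge0 (sqr_ge0 _).
- by apply: divr_ge0; apply/ltW; apply: mulr_gt0 => //; apply: addr_gt0.
- exact: divr_ge0 eps_ge0 (sqr_ge0 _).
Qed.

Lemma blk_row_sum r : diag r - 2 * cX + sub r + sup r = beta.
Proof.
have H_neq0 : H != 0 by rewrite gt_eqF ?Hy_gt0.
have h_neq0 : h != 0 by rewrite gt_eqF ?hy_gt0.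
have Hh_neq0 : H + h != 0 by rewrite gt_eqF ?addr_gt0 ?Hy_gt0 ?hy_gt0.
have Hx_neq0 : Hx R N != 0 by rewrite gt_eqF ?Hx_gt0.
rewrite /blk_diag /blk_sub /blk_sup; case: ifP => _; [|case: ifP => _].
- by rewrite /a_H /d_H /e_H; field; rewrite H_neq0 Hx_neq0.
- by rewrite /a_0 /d_0 /e_0; field; rewrite H_neq0 h_neq0 Hh_neq0 Hx_neq0.
- by rewrite /a_h /d_h /e_h; field; rewrite h_neq0 Hx_neq0.
Qed.

(* [rho] is the root other than 1 of [e_H + (a_H - 2 cX - beta) t + d_H t^2]. *)
Lemma coarse_rho_identity :
  rho * (a_H eps beta M N - 2 * cX) + rho ^+ 2 * d_H eps M + e_H eps M = rho * beta.
Proof.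
have H_gt0 := Hy_gt0; have Hx_gt0 := Hx_gt0.
rewrite /Defs.rho /a_H /d_H /e_H; field.
by rewrite !gt_eqF ?addr_gt0.
Qed.

Lemma line_addn r i : (i < n)%N -> ((r * n + i) %/ n)%N = r.
Proof. by move=> i_lt; rewrite divnMDl ?divn_small ?addn0 //; have := nn_gt1; lia. Qed.

Lemma pos_addn r i : (i < n)%N -> ((r * n + i) %% n)%N = i.
Proof. by move=> i_lt; rewrite modnMDl modn_small. Qed.

Lemma eq_line_pos r i s j : (i < n)%N -> (j < n)%N ->
  (s * n + j == r * n + i)%N = (s == r) && (j == i).
Proof.
move=> i_lt j_lt; apply/eqP/andP => [e|[/eqP-> /eqP->]] //; split; apply/eqP.
  by have := congr1 (divn^~ n) e; rewrite /= !line_addn.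
by have := congr1 (modn^~ n) e; rewrite /= !pos_addn.
Qed.

(* [p +- n] are the vertical neighbours of [p], and [p +- 1] the horizontal ones
   when they lie on the same grid line. *)
Lemma Aentry_stencil p q : Aentry p q =
    (if q == p then diag (line p) else 0)
  + (if (q == p + n)%N then sup (line p) else 0)
  + (if (q + n == p)%N then sub (line p) else 0)
  + (if (q == p.+1) && (line q == line p) then - eps / Hx R N ^+ 2 else 0)
  + (if (q.+1 == p) && (line q == line p) then - eps / Hx R N ^+ 2 else 0).
Proof.
have n_gt0 : (0 < n)%N by have := nn_gt1; lia.
rewrite /Aentry /=; set r := line p; set i := (p %% n)%N.
set s := line q; set j := (q %% n)%N.
have [i_lt j_lt] : (i < n)%N /\ (j < n)%N by rewrite !ltn_pmod.
rewrite (divn_eq p n) (divn_eq q n) -/r -/i -/s -/j; clearbody r i s j.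
have adjE a b : (s * n + a == r * n + b)%N && (s == r) = (s == r) && (a == b).
  by case: (eqVneq s r) => [->|]; rewrite ?eqn_add2l ?andbT ?andbF.
rewrite -!addnS !adjE (addnAC (r * n)%N) (addnAC (s * n)%N) -!mulSnr !eq_line_pos //.
rewrite [r == s]eq_sym [i == j]eq_sym [r.+1 == s]eq_sym [i.+1 == j]eq_sym.
by do ![case: eqP => ?]; rewrite /=; first [by exfalso; lia | ring].
Qed.

Lemma lineDn q : line (q + n) = (line q).+1.
Proof. by rewrite divnDr // divnn (ltnW nn_gt1) addn1. Qed.

Definition line_vec (f : nat -> R) : 'cV[R]_dA := \col_q f (line q).

Definition line_stencil (f : nat -> R) r :=
  f r * (diag r - 2 * cX) + (if (0 < r)%N then sub r * f r.-1 else 0) + sup r * f r.+1.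

Section LineVector.
Variables (f : nat -> R) (p : 'I_dA).
Hypothesis f_ge0 : forall r, 0 <= f r.

Let r := line p.

Let stencil_lb (q : nat) :=
    (if q == p then f r * diag r else 0)
  + (if (q == p + n)%N then sup r * f r.+1 else 0)
  + (if (q + n == p)%N then sub r * f r.-1 else 0)
  + (if q == p.+1 then - cX * f r else 0)
  + (if q.+1 == p then - cX * f r else 0).

Let hneigh_le0 : - cX * f r <= 0.
Proof. by rewrite mulNr oppr_le0 mulr_ge0 ?cX_ge0. Qed.

Lemma stencil_lb_le q : stencil_lb q <= Aentry p q * f (line q).
Proof.
have hneigh (b : bool) : (if b && (line q == r) then - eps / Hx R N ^+ 2 else 0) * f (line q)
    >= (if b then - cX * f r else 0).
  case: b => /=; last by rewrite mul0r.
  by case: eqP => [->|_]; [rewrite !mulNr | rewrite mul0r hneigh_le0].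
rewrite /stencil_lb Aentry_stencil !mulrDl.
apply: lerD (lerD (lerD (lerD _ _) _) _) _.
- by case: eqP => [->|_]; [rewrite mulrC | rewrite mul0r].
- by case: eqP => [->|_]; rewrite ?lineDn ?mul0r.
- by rewrite /r; case: eqP => [<-|_]; rewrite ?lineDn ?mul0r.
- exact: hneigh.
- exact: hneigh.
Qed.

Lemma line_stencil_le_sum : line_stencil f r <= \sum_(q < dA) stencil_lb q.
Proof.
have n_gt0 : (0 < n)%N by have := nn_gt1; lia.
have diag_sum : \sum_(q < dA) (if (q : nat) == p then f r * diag r else 0) = f r * diag r.
  by rewrite (sum_if_inj_eq _ _ _ (@inj_id nat)); case: existsP => // -[]; exists p.
have up_sum : sup r * f r.+1 <= \sum_(q < dA) (if (q : nat) == (p + n)%N then sup r * f r.+1 else 0).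
  by apply: sum_if_inj_eq_ge _ _ (@inj_id nat) _; rewrite mulr_le0_ge0 ?blk_sup_le0.
have down_sum : \sum_(q < dA) (if (q + n == p)%N then sub r * f r.-1 else 0) =
    if (0 < r)%N then sub r * f r.-1 else 0.
  rewrite (sum_if_inj_eq _ _ _ (@addIn n)).
  congr (if _ then _ else _); apply/existsP/idP => [[q /eqP qnp]|r_gt0].
    by rewrite /r -qnp lineDn.
  have p_ge : (n <= p)%N by rewrite -divn_gt0.
  have pn_lt : (p - n < dA)%N by have := ltn_ord p; lia.
  by exists (Ordinal pn_lt); rewrite /= subnK.
have right_sum : - cX * f r <= \sum_(q < dA) (if (q : nat) == p.+1 then - cX * f r else 0).
  exact: sum_if_inj_eq_ge _ _ (@inj_id nat) hneigh_le0.
have left_sum : - cX * f r <= \sum_(q < dA) (if q.+1 == p then - cX * f r else 0).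
  exact: sum_if_inj_eq_ge _ _ succn_inj hneigh_le0.
rewrite /stencil_lb !big_split /= diag_sum down_sum /line_stencil.
lra.
Qed.

End LineVector.

Lemma Amat_line_vec_ge (f : nat -> R) : (forall r, 0 <= f r) ->
  forall p : 'I_dA, line_stencil f (line p) <= (A *m line_vec f) p 0.
Proof.
move=> f_ge0 p; rewrite mxE; apply: le_trans (line_stencil_le_sum p f_ge0) _.
by apply: ler_sum => q _; rewrite !mxE; apply: stencil_lb_le.
Qed.

Lemma Amat_Z : Z_matrix A.
Proof.
move=> p q pq; have qp : (q == p :> nat) = false by rewrite eq_sym; apply: negbTE pq.
have c_le0 : - eps / Hx R N ^+ 2 <= 0 by rewrite mulNr oppr_le0 cX_ge0.
have := blk_sup_le0 (line p); have := blk_sub_lt0 (line p).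
by rewrite mxE Aentry_stencil qp add0r; do 4 case: ifP => _; lra.
Qed.

Lemma Amat_chained : lower_chained_dominant A.
Proof.
move=> p; have n_gt1 := nn_gt1.
have -> : \sum_q A p q = (A *m line_vec (fun _ => 1)) p 0.
  by rewrite mxE; apply: eq_bigr => q _; rewrite !mxE mulr1.
have := Amat_line_vec_ge (fun _ => ler01) p; rewrite /line_stencil !mul1r !mulr1.
have := blk_row_sum (line p); have := blk_sub_lt0 (line p); have := beta_ge0.
case: (posnP (line p)) => [_|line_gt0] /= ? ? ? ?; [left | right]; first lra.
split; first lra.
have p_ge : (n <= p)%N by rewrite -divn_gt0 //; lia.
have pn_lt : (p - n < dA)%N by have := ltn_ord p; lia.
exists (Ordinal pn_lt); rewrite /=; first lia.
have [c1 c2 c3 c4] : [/\ (p - n == p)%N = false, (p - n == p + n)%N = false,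
    (p - n == p.+1)%N = false & ((p - n).+1 == p)%N = false] by split; apply/eqP; lia.
by rewrite mxE Aentry_stencil /= c1 c2 c3 c4 subnK // eqxx /= !add0r !addr0.
Qed.

Lemma line_stencil_const r : 0 <= line_stencil (fun _ => 1) r.
Proof.
rewrite /line_stencil !mul1r !mulr1.
have := blk_row_sum r; have := blk_sub_lt0 r; have := beta_ge0.
by case: (posnP r) => _ /=; lra.
Qed.

Lemma line_stencil_rho r : (r <= m)%N -> 0 <= line_stencil (fun s => rho ^+ (m - s)) r.
Proof.
move=> r_le; have rho_ge0 := rho_ge0; rewrite /line_stencil.
have [r_lt|r_ge] := ltnP r m.
  rewrite /blk_diag /blk_sub /blk_sup r_lt.
  have dH_lt0 : d_H eps M < 0 by have := blk_sub_lt0 0; rewrite /blk_sub mm_gt0.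
  set t := rho ^+ (m - r.+1); have t_ge0 : 0 <= t by rewrite exprn_ge0.
  have -> : rho ^+ (m - r) = t * rho by rewrite -exprSr; congr (_ ^+ _); lia.
  have down_ge : t * (rho ^+ 2 * d_H eps M) <=
      if (0 < r)%N then d_H eps M * rho ^+ (m - r.-1) else 0.
    case: (posnP r) => [_|r_gt0] /=.
      exact: mulr_ge0_le0 t_ge0 (mulr_ge0_le0 (exprn_ge0 _ rho_ge0) (ltW dH_lt0)).
    suff -> : d_H eps M * rho ^+ (m - r.-1) = t * (rho ^+ 2 * d_H eps M) by [].
    by rewrite /t mulrA -exprD mulrC; congr (_ ^+ _ * _); lia.
  have key : t * (rho * (a_H eps beta M N - 2 * cX)) + t * (rho ^+ 2 * d_H eps M)
      + t * e_H eps M = t * (rho * beta) by rewrite -!mulrDr coarse_rho_identity.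
  have := mulr_ge0 t_ge0 (mulr_ge0 rho_ge0 beta_ge0).
  lra.
have -> : r = m by apply/eqP; rewrite eqn_leq r_le r_ge.
rewrite subnn (_ : m - m.+1 = 0)%N ?subnn //; last lia.
rewrite (_ : m - m.-1 = 1)%N; last by have := mm_gt0; lia.
rewrite mm_gt0 !expr0 expr1 !mul1r mulr1.
have := blk_row_sum m; have := blk_sub_lt0 m.
rewrite /blk_diag /blk_sub /blk_sup ltnn eqxx => d0_lt0 row_sum.
have : 0 <= - d_0 eps M * (1 - rho).
  by apply: mulr_ge0; [rewrite oppr_ge0 ltW | rewrite subr_ge0 rho_le1].
have := beta_ge0; lra.
Qed.

Lemma window1_le : (dS + 0 <= dA)%N.
Proof. by rewrite /dimS /dimA addn0 leq_mul2l; apply/orP; right; lia. Qed.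

Lemma window2_eq : (dS + n * m = dA)%N.
Proof. by rewrite /dimS /dimA -mulnDr; congr (_ * _)%N; lia. Qed.

Lemma window2_le : (dS + n * m <= dA)%N.
Proof. by rewrite window2_eq. Qed.

Lemma in_window1 (q : 'I_dA) : in_window dS 0 q = (q < dS)%N.
Proof. by rewrite /in_window add0n. Qed.

Lemma in_window2 (q : 'I_dA) : in_window dS (n * m) q = (n * m <= q)%N.
Proof. by rewrite /in_window addnC window2_eq ltn_ord andbT. Qed.

Lemma local_Amat_unit o : (dS + o <= dA)%N -> local_mx dS o A \in unitmx.
Proof.
move=> window_le; apply: (local_mx_unit window_le) => u Au0 u0.
exact: (harmonic_eq0 Amat_Z Amat_chained (D := in_window dS o) Au0 u0).
Qed.

Lemma Q1matE : Q1 = schwarz_Q dS 0 A.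
Proof.
have R1E : R1mat R M N = restr_mx R dS dA 0 by apply/matrixP => p q; rewrite !mxE addn0.
have A1E : A1mat eps beta M N = local_mx dS 0 A.
  rewrite (local_mxE window1_le (F := Aentry)) //.
  by apply/matrixP => p q; rewrite !mxE !addn0.
by rewrite /Q1mat /P1mat R1E A1E.
Qed.

Lemma Q2matE : Q2 = schwarz_Q dS (n * m) A.
Proof.
have A2E : A2mat eps beta M N = local_mx dS (n * m) A.
  by rewrite (local_mxE window2_le (F := Aentry)).
by rewrite /Q2mat /P2mat A2E.
Qed.

Lemma lt_dimS_line (q : 'I_dA) : (q < dS)%N = (line q <= m)%N.
Proof. by rewrite -[(_ <= m)%N]ltnS ltn_divLR ?(ltnW nn_gt1) // /dimS mulnC addn1. Qed.

Lemma lt_nm_line (q : 'I_dA) : (q < n * m)%N = (line q < m)%N.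
Proof. by rewrite ltn_divLR ?(ltnW nn_gt1) // mulnC. Qed.

Lemma Q1_harmonic (e : 'cV[R]_dA) (q : 'I_dA) : (q < dS)%N -> (A *m (Q1 *m e)) q 0 = 0.
Proof.
move=> q_lt; rewrite Q1matE.
by apply: (schwarz_Q_harmonic window1_le e (local_Amat_unit window1_le)); rewrite in_window1.
Qed.

Lemma Q1_out (e : 'cV[R]_dA) (q : 'I_dA) : (dS <= q)%N -> (Q1 *m e) q 0 = e q 0.
Proof. by move=> q_ge; rewrite Q1matE (schwarz_Q_out _ window1_le) // in_window1 -leqNgt. Qed.

Lemma Q2_harmonic (e : 'cV[R]_dA) (q : 'I_dA) : (n * m <= q)%N -> (A *m (Q2 *m e)) q 0 = 0.
Proof.
move=> q_ge; rewrite Q2matE.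
by apply: (schwarz_Q_harmonic window2_le e (local_Amat_unit window2_le)); rewrite in_window2.
Qed.

Lemma Q2_out (e : 'cV[R]_dA) (q : 'I_dA) : (q < n * m)%N -> (Q2 *m e) q 0 = e q 0.
Proof. by move=> q_lt; rewrite Q2matE (schwarz_Q_out _ window2_le) // in_window2 -ltnNge. Qed.

Lemma Q1_entry_le e q : `|(Q1 *m e) q 0| <= K1 e * rho ^+ (m - line q).
Proof.
set phi := K1 e *: line_vec (fun s => rho ^+ (m - s)).
have phiE k : phi k 0 = K1 e * rho ^+ (m - line k) by rewrite !mxE.
rewrite -phiE.
apply: (harmonic_le_barrier Amat_Z Amat_chained (D := fun k : 'I_dA => (k < dS)%N)) => k.
- exact: Q1_harmonic.
- rewrite lt_dimS_line => k_le; rewrite -scalemxAr mxE.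
  apply: mulr_ge0 (supnorm_on_ge0 _ _) _.
  exact: le_trans (line_stencil_rho k_le) (Amat_line_vec_ge (fun s => exprn_ge0 _ rho_ge0) k).
- rewrite -leqNgt => k_ge; rewrite Q1_out // phiE.
  rewrite (_ : m - line k = 0)%N ?expr0 ?mulr1 ?ler_supnorm_on //.
  by apply/eqP; rewrite subn_eq0 ltnW // ltnNge -lt_dimS_line -leqNgt.
Qed.

Lemma Q2_entry_le e q : `|(Q2 *m e) q 0| <= K2 e.
Proof.
set phi := K2 e *: line_vec (fun _ => 1).
have phiE k : phi k 0 = K2 e by rewrite !mxE mulr1.
rewrite -(phiE q).
apply: (harmonic_le_barrier Amat_Z Amat_chained (D := fun k : 'I_dA => (n * m <= k)%N)) => k.
- exact: Q2_harmonic.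
- move=> _; rewrite -scalemxAr mxE; apply: mulr_ge0 (supnorm_on_ge0 _ _) _.
  exact: le_trans (line_stencil_const _) (Amat_line_vec_ge (fun _ => ler01) k).
- by rewrite -ltnNge => k_lt; rewrite Q2_out // phiE ler_supnorm_on.
Qed.

Lemma vnorm_Q1_le e : vnorm_inf (Q1 *m e) <= K1 e.
Proof.
apply: vnorm_inf_le (supnorm_on_ge0 _ _) _ => q; apply: le_trans (Q1_entry_le e q) _.
exact: ler_piMr (supnorm_on_ge0 _ _) (exprn_ile1 _ rho_ge0 rho_le1).
Qed.

Lemma vnorm_Q2_le e : vnorm_inf (Q2 *m e) <= K2 e.
Proof. exact: vnorm_inf_le (supnorm_on_ge0 _ _) (Q2_entry_le e). Qed.

(* The lines [q < n m] lie below the interface line [m], so the barrier exponent is at least 1. *)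
Lemma K2_Q1_le e : K2 (Q1 *m e) <= rho * K1 e.
Proof.
apply: supnorm_on_le => [|q]; first exact: mulr_ge0 rho_ge0 (supnorm_on_ge0 _ _).
rewrite lt_nm_line => q_lt; apply: le_trans (Q1_entry_le e q) _.
rewrite mulrC ler_wpM2r ?supnorm_on_ge0 //.
rewrite (_ : m - line q = (m - (line q).+1).+1)%N; last lia.
by rewrite exprS; apply: ler_piMr rho_ge0 (exprn_ile1 _ rho_ge0 rho_le1).
Qed.

Lemma K1_Q2_le e : K1 (Q2 *m e) <= K2 e.
Proof. exact: le_trans (supnorm_on_le_vnorm _ _) (vnorm_Q2_le e). Qed.

Lemma Q2_first_lines (e e' : 'cV[R]_dA) :
  (forall q : 'I_dA, (q < n * m)%N -> e q 0 = e' q 0) -> Q2 *m e = Q2 *m e'.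
Proof.
move=> ee'; apply/eqP; rewrite -subr_eq0 -mulmxBr; apply/eqP.
apply: (harmonic_eq0 Amat_Z Amat_chained (D := fun q : 'I_dA => (n * m <= q)%N)) => q.
  exact: Q2_harmonic.
by rewrite -ltnNge => q_lt; rewrite Q2_out // entryB ee' ?subrr.
Qed.

Lemma T12_contract v : vnorm_inf (T12 eps beta M N *m v) <= rho * vnorm_inf v.
Proof.
rewrite /T12 -mulmxA; apply: le_trans (vnorm_Q2_le _) _; apply: le_trans (K2_Q1_le _) _.
by rewrite ler_wpM2l ?rho_ge0 ?supnorm_on_le_vnorm.
Qed.

Lemma T21_le v : vnorm_inf (T21 eps beta M N *m v) <= K2 v.
Proof. by rewrite /T21 -mulmxA; apply: le_trans (vnorm_Q1_le _) (K1_Q2_le v). Qed.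

Lemma K2_T21_contract v : K2 (T21 eps beta M N *m v) <= rho * K2 v.
Proof.
by rewrite /T21 -mulmxA; apply: le_trans (K2_Q1_le _) _; rewrite ler_wpM2l ?rho_ge0 ?K1_Q2_le.
Qed.

Lemma T21_factor v :
  vnorm_inf (T21 eps beta M N *m v) <= mnorm_inf (T21 eps beta M N) * K2 v.
Proof.
pose w := \col_(q < dA) (if (q < n * m)%N then v q 0 else 0).
have -> : T21 eps beta M N *m v = T21 eps beta M N *m w.
  by rewrite /T21 -!mulmxA (Q2_first_lines (e' := w)) // => q q_lt; rewrite mxE q_lt.
apply: le_trans (vnorm_inf_mulmx _ _) _; rewrite ler_wpM2l ?mnorm_inf_ge0 //.
apply: vnorm_inf_le (supnorm_on_ge0 _ _) _ => q; rewrite mxE.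
by case: ifP => [q_lt|_]; rewrite ?ler_supnorm_on ?normr0 ?supnorm_on_ge0.
Qed.

End ShishkinMatrix.

Theorem corollary5p2 (R : realType) (eps beta : R) (M N : nat)
  (heps : 0 < eps) (hbeta : 0 <= beta)
  (hM : (4 <= M)%N) (hMeven : ~~ odd M) (hN : (3 <= N)%N) :
  (forall T : 'M[R]_(dimA M N),
     T = T12 eps beta M N \/ T = T21 eps beta M N ->
     forall (b x0 : 'cV[R]_(dimA M N)),
       let x := invmx (Amat eps beta M N) *m b in
       let v := (1%:M - T) *m x in
       let e := fun k => x - iterate T v x0 k in
       e 0%N != 0 ->
       forall k : nat,
         vnorm_inf (e k.+1) / vnorm_inf (e 0%N)
           <= rho eps M ^+ k * mnorm_inf T)
  /\ mnorm_inf (T12 eps beta M N) <= rho eps M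
  /\ mnorm_inf (T21 eps beta M N) <= 1.
Proof.
have rho_ge0 := rho_ge0 heps hbeta hM hN.
have T12_contract := T12_contract heps hbeta hM hN.
split; [|split].
- move=> T [->|->] b x0 x.
    exact: (iterate_error_ratio_le rho_ge0 T12_contract (@vnorm_inf_mulmx _ _ _ _)
      (fun v => lexx _)).
  exact: (iterate_error_ratio_le rho_ge0 (K2_T21_contract heps hbeta hM hN)
    (T21_factor heps hbeta hM hN) (@supnorm_on_le_vnorm _ _ _)).
- exact: mnorm_inf_le rho_ge0 T12_contract.
- apply: mnorm_inf_le ler01 _ => v; rewrite mul1r.
  exact: le_trans (T21_le heps hbeta hM hN v) (supnorm_on_le_vnorm _ _).
Qed.
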